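(* Let $X\in\mathbb{R}^{n\times nN}$ and $U\in\mathbb{R}^{m\times nN}$ satisfy $AX+BU=X(P\otimes I_n)$ and $X(\mathrm{e}_1\otimes I_n)=I_n$. Then $\Psi=\begin{bmatrix}X\\ Z\end{bmatrix}\in\mathbb{R}^{nN\times nN}$ is invertible, and if $(K,H,G,F)$ is the (unique) solution of $\begin{bmatrix} K & H \\ G & F \end{bmatrix}\Psi=\begin{bmatrix} U \\ V \end{bmatrix}$, then the closed-loop matrix $\mathcal{A}_{cl}=\begin{bmatrix}A+BK & BH\\ G & F\end{bmatrix}$ satisfies $\mathcal{A}_{cl}=\Psi(P\otimes I_n)\Psi^{-1}$.
   Context: $A\in\mathbb{R}^{n\times n}$, $B\in\mathbb{R}^{n\times m}$, $N\ge 2$. $\mathrm{e}_1\in\mathbb{R}^N$ is the first standard basis vector. $P\in\mathbb{R}^{N\times N}$ is the nilpotent shift matrix $P=\begin{bmatrix}0 & 0\\ I_{N-1} & 0\end{bmatrix}$. $\otimes$ is the Kronecker product. $Z=\begin{bmatrix}0_{n(N-1)\times n} & I_{n(N-1)}\end{bmatrix}$ and $V=Z(P\otimes I_n)$. $K\in\mathbb{R}^{m\times n}$, $H\in\mathbb{R}^{m\times n(N-1)}$, $G\in\mathbb{R}^{n(N-1)\times n}$, $F\in\mathbb{R}^{n(N-1)\times n(N-1)}$. *)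

(* Kronecker product: tensmx ( *t ) from mathcomp real_closed mxtens,
   with row index (i,j) |-> i * p + j (standard Kronecker convention). *)
From mathcomp Require Import all_boot all_order all_algebra.
From mathcomp Require Export mxtens.
Set Implicit Arguments. Unset Strict Implicit. Unset Printing Implicit Defensive.
Import GRing.Theory.
Local Open Scope ring_scope.

Definition shiftP (R : pzRingType) (N : nat) : 'M[R]_N :=
  \matrix_(i < N, j < N) ((i : nat) == (j : nat).+1)%:R.

Definition e1 (R : pzRingType) (N : nat) : 'M[R]_(N.+1, 1) := delta_mx ord0 ord0.

(* Z = [0_{n(N-1) x n}  I_{n(N-1)}], here with N = N'.+2 so N-1 = N'.+1 and
   n N = (N'.+2) * n = n + (N'.+1) * n definitionally *)
Definition Zmx (R : pzRingType) (n N' : nat) : 'M[R]_((N'.+1) * n, (N'.+2) * n) :=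
  row_mx (0 : 'M[R]_((N'.+1) * n, n)) (1%:M : 'M[R]_((N'.+1) * n)).

From mathcomp Require Import all_boot all_order all_algebra.
Import GRing.Theory Num.Theory.
Local Open Scope ring_scope.

(* Write nN = n + (N-1)n and split every nN-column matrix into its
   first n columns and the remaining (N-1)n.  The column e_1 (x) I_n is then the
   block column [I_n; 0], so the normalisation X (e_1 (x) I_n) = I_n says that
   the leading n x n block of X is I_n.  Hence Psi = [X; Z] = [[I, Y]; [0, I]]
   is block unitriangular and therefore invertible.  For the similarity, the
   defining equation [K H; G F] Psi = [U; V] together with A X + B U = X (P (x) I)
   and V = Z (P (x) I) gives, row block by row block,
     A_cl Psi = [A X + B (K X + H Z); G X + F Z] = [X (P (x) I); Z (P (x) I)]
              = Psi (P (x) I),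
   and multiplying on the right by Psi^-1 yields A_cl = Psi (P (x) I) Psi^-1.
   The file proves these three facts (shape of e_1 (x) I_n, invertibility of a
   unitriangular block matrix, the block intertwining identity) in general and
   assembles them in mainTheorem2. *)

Lemma e1_kron_id (R : pzRingType) (n N' : nat) :
  castmx (erefl, mul1n n) (e1 R N'.+1 *t (1%:M : 'M[R]_n))
  = (col_mx (1%:M : 'M[R]_n) (0 : 'M[R]_(N'.+1 * n, n)) : 'M[R]_(N'.+2 * n, n)).
Proof.
apply/matrixP=> i j; rewrite castmxE !mxE /= -!val_eqE /=.
have jn : (j < n)%N by case: j.
rewrite (divn_small jn) eqxx andbT.
case: splitP => k hk; rewrite mxE /= hk.
- have kn : (k < n)%N := ltn_ord k.
  by rewrite -val_eqE /= divn_small // !modn_small // eqxx mul1r.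
- have n_pos : (0 < n)%N by apply: leq_ltn_trans jn.
  have -> : ((n + k) %/ n)%N == 0%N = false.
    by apply/negbTE; rewrite -lt0n divn_gt0 ?leq_addr.
  by rewrite mul0r.
Qed.

Lemma lead_block_id (R : pzRingType) (n k : nat) (X : 'M[R]_(n, n + k)) :
  X *m col_mx 1%:M 0 = 1%:M -> X = row_mx 1%:M (rsubmx X).
Proof.
move=> hX; rewrite -{1}[X]hsubmxK; congr row_mx.
by rewrite -hX -[X in X *m _]hsubmxK mul_row_col mulmx1 mulmx0 addr0.
Qed.

Lemma unitmx_unitriangular (R : comUnitRingType) (n k : nat) (Y : 'M[R]_(n, k)) :
  col_mx (row_mx 1%:M Y) (row_mx 0 1%:M) \in unitmx.
Proof. by rewrite -block_mxEv unitmxE det_ublock !det1 mulr1 unitr1. Qed.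

Lemma closed_loop_intertwines (R : pzRingType) (n m q p : nat)
    (A : 'M[R]_n) (B : 'M[R]_(n, m)) (X : 'M[R]_(n, p)) (Z : 'M[R]_(q, p))
    (U : 'M[R]_(m, p)) (P : 'M[R]_p)
    (K : 'M[R]_(m, n)) (H : 'M[R]_(m, q)) (G : 'M[R]_(q, n)) (F : 'M[R]_q) :
  A *m X + B *m U = X *m P ->
  block_mx K H G F *m col_mx X Z = col_mx U (Z *m P) ->
  block_mx (A + B *m K) (B *m H) G F *m col_mx X Z = col_mx X Z *m P.
Proof.
move=> hAB; rewrite !mul_block_col => /eq_col_mx [hU hV].
rewrite mul_col_mx -hV -hAB -hU.
by rewrite mulmxDl mulmxDr -!mulmxA addrA.
Qed.

Theorem mainTheorem2 (R : realFieldType) (n m N' : nat)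
  (A : 'M[R]_n) (B : 'M[R]_(n, m))
  (X : 'M[R]_(n, (N'.+2) * n)) (U : 'M[R]_(m, (N'.+2) * n)) :
  let N := N'.+2 in
  let PI : 'M[R]_(N * n) := shiftP R N *t (1%:M : 'M[R]_n) in
  let E1 : 'M[R]_(N * n, n) := castmx (erefl, mul1n n) (e1 R N'.+1 *t (1%:M : 'M[R]_n)) in
  let Z := Zmx R n N' in
  let V := Z *m PI in
  let Psi : 'M[R]_(N * n) := col_mx X Z in
  A *m X + B *m U = X *m PI ->
  X *m E1 = 1%:M ->
  Psi \in unitmx /\
  forall (K : 'M[R]_(m, n)) (H : 'M[R]_(m, (N'.+1) * n))
         (G : 'M[R]_((N'.+1) * n, n)) (F : 'M[R]_((N'.+1) * n)),
    block_mx K H G F *m Psi = col_mx U V ->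
    (block_mx (A + B *m K) (B *m H) G F : 'M[R]_(N * n)) = Psi *m PI *m invmx Psi.
Proof.
move=> N PI E1 Z V Psi hAB hXE.
have uPsi : Psi \in unitmx.
  rewrite /E1 e1_kron_id in hXE.
  by rewrite /Psi (@lead_block_id _ n (N'.+1 * n) X hXE) /Z /Zmx unitmx_unitriangular.
split=> // K H G F hKHGF.
apply: (canRL (mulmxK uPsi)).
exact: closed_loop_intertwines hAB hKHGF.
Qed.
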